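(* Let $(B,\lfloor\cdot,\cdot\rfloor)$ be an SSD space with quadratic form $q$ and let $P\subset B$ be an affine $q$-positive set. Then $P$ is premaximally $q$-positive if and only if $P^{\pi}$ is an affine subset of $B$.
   Context: An SSD space is a pair $(B,\lfloor\cdot,\cdot\rfloor)$ with $B$ a nonzero real vector space and $\lfloor\cdot,\cdot\rfloor$ a symmetric bilinear form; $q(b)=\frac12\lfloor b,b\rfloor$. A nonempty $A\subset B$ is $q$-positive if $q(b-c)\ge0$ for all $b,c\in A$; maximally $q$-positive if $q$-positive and not properly contained in another $q$-positive set. $A^{\pi}:=\{b\in B: q(b-a)\ge0\ \forall a\in A\}$. $P$ is premaximally $q$-positive if there is a unique maximally $q$-positive set containing $P$. *)

From HB Require Import structures.
From mathcomp Require Import all_boot all_order all_algebra.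
From mathcomp Require Import boolp classical_sets reals.
Set Implicit Arguments. Unset Strict Implicit. Unset Printing Implicit Defensive.
Import Order.TTheory GRing.Theory Num.Theory.
Local Open Scope ring_scope.
Local Open Scope classical_set_scope.

Section SSD.
Variables (R : realType) (V : lmodType R).

Definition sym_bilinear (f : V -> V -> R) : Prop :=
  (forall (a : R) (x y z : V), f (a *: x + y) z = a * f x z + f y z) /\
  (forall x y : V, f x y = f y x).

Definition nonzero_space : Prop := exists v : V, v != 0.

Definition qf (f : V -> V -> R) (b : V) : R := f b b / 2.

Definition q_positive (f : V -> V -> R) (A : set V) : Prop :=
  A !=set0 /\ forall b c, A b -> A c -> 0 <= qf f (b - c).

Definition max_q_positive (f : V -> V -> R) (A : set V) : Prop :=
  q_positive f A /\ forall A', q_positive f A' -> A `<=` A' -> A' = A.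

Definition pi_set (f : V -> V -> R) (A : set V) : set V :=
  [set b | forall a, A a -> 0 <= qf f (b - a)].

Definition premax_q_positive (f : V -> V -> R) (P : set V) : Prop :=
  exists! M : set V, max_q_positive f M /\ P `<=` M.

Definition affine_set (A : set V) : Prop :=
  forall (x y : V) (t : R), A x -> A y -> A (t *: x + (1 - t) *: y).

End SSD.

From HB Require Import structures.
From mathcomp Require Import all_boot all_order all_algebra.
From mathcomp Require Import boolp classical_sets reals.
From mathcomp Require Import ring lra.
Set Implicit Arguments. Unset Strict Implicit. Unset Printing Implicit Defensive.
Import Order.TTheory GRing.Theory Num.Theory.
Local Open Scope ring_scope.
Local Open Scope classical_set_scope.

(* Every maximally q-positive set containing P lies in P^pi, and P^pi contains
   every point b that can be added to P, so P has a unique maximal extension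
   iff P^pi is itself q-positive (then P^pi is that extension).  When P is
   affine, P^pi is stable under the dilations p + s(b - p) about points p of P
   and under translations by P - P; so if P^pi is q-positive, an affine
   combination t x + (1 - t) y minus a point w of P can be rewritten as the
   difference of two points of P^pi, and conversely, for a, b in P^pi, the
   vector a - b is twice ((a + b') / 2 - p) with b' = 2p - b in P^pi. *)

(* Identities between linear combinations of at most four vectors are reduced
   to identities between their coefficients, which [ring] or [field] solve. *)
Lemma lincomb4 (R : pzRingType) (V : lmodType R) (x y w p : V) :
  exists L : R -> R -> R -> R -> V,
  [/\ forall a b c d a' b' c' d',
        L a b c d + L a' b' c' d' = L (a + a') (b + b') (c + c') (d + d'),
      forall k a b c d, k *: L a b c d = L (k * a) (k * b) (k * c) (k * d),
      forall a b c d, - L a b c d = L (- a) (- b) (- c) (- d),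
      x = L 1 0 0 0 /\ y = L 0 1 0 0 & w = L 0 0 1 0 /\ p = L 0 0 0 1].
Proof.
exists (fun a b c d => a *: x + b *: y + c *: w + d *: p); split.
- move=> *; rewrite !scalerDl addrACA; congr (_ + _).
  by rewrite addrACA; congr (_ + _); rewrite addrACA.
- by move=> *; rewrite !scalerDr !scalerA.
- by move=> *; rewrite !opprD !scaleNr.
- by rewrite !scale1r !scale0r !addr0 !add0r.
- by rewrite !scale1r !scale0r !addr0 !add0r.
Qed.

Ltac lincomb4_coeffs x y w p :=
  let L := fresh "L" in let LD := fresh in let LZ := fresh in let LN := fresh in
  let Ex := fresh in let Ey := fresh in let Ew := fresh in let Ep := fresh in
  have [L [LD LZ LN [Ex Ey] [Ew Ep]]] := lincomb4 x y w p;
  rewrite ?Ex ?Ey ?Ew ?Ep; rewrite !(LN, LZ, LD); congr L.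

Ltac lincomb4_eq x y w p := lincomb4_coeffs x y w p; first [ring | by field].

Section SymBilinear.
Variables (R : realType) (V : lmodType R) (f : V -> V -> R).
Hypothesis f_sym_bilinear : sym_bilinear f.

Lemma bilin0l z : f 0 z = 0.
Proof. by have := f_sym_bilinear.1 1 0 0 z; rewrite scaler0 addr0 mul1r; lra. Qed.

Lemma bilinZl a x z : f (a *: x) z = a * f x z.
Proof. by have := f_sym_bilinear.1 a x 0 z; rewrite addr0 bilin0l addr0. Qed.

Lemma bilinZr a x z : f z (a *: x) = a * f z x.
Proof. by rewrite f_sym_bilinear.2 bilinZl f_sym_bilinear.2. Qed.

Lemma qfZ a x : qf f (a *: x) = a ^+ 2 * qf f x.
Proof. by rewrite /qf bilinZl bilinZr; ring. Qed.

Lemma qf0 : qf f 0 = 0.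
Proof. by rewrite /qf bilin0l mul0r. Qed.

Lemma qfN x : qf f (- x) = qf f x.
Proof. by rewrite -scaleN1r qfZ expr2 mulN1r opprK mul1r. Qed.

Lemma qfZ_ge0 a x : 0 <= qf f x -> 0 <= qf f (a *: x).
Proof. by move=> qx_ge0; rewrite qfZ mulr_ge0 // sqr_ge0. Qed.

End SymBilinear.

Section MaximalExtension.
Variables (R : realType) (V : lmodType R) (f : V -> V -> R).

Lemma q_positive_sub_pi (P M : set V) :
  q_positive f M -> P `<=` M -> M `<=` pi_set f P.
Proof. by move=> qM PM m Mm p Pp; apply: qM.2 => //; apply: PM. Qed.

Lemma q_positive_sub_max (A : set V) :
  q_positive f A -> exists2 M, max_q_positive f M & A `<=` M.
Proof.
move=> qA.
have [B [qAB Bmax]] : exists B, q_positive f (A `|` B) /\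
    forall B', B `<` B' -> ~ q_positive f (A `|` B').
  apply: Zorn_bigcup => F qF Ftot; split; first by case: qA.1 => a Aa; exists a; left.
  have in_AF u : (A `|` \bigcup_(X in F) X) u -> A u \/ exists2 X, F X & X u.
    by case=> [Au|[X FX Xu]]; [left|right; exists X].
  move=> u v /in_AF [Au|[X FX Xu]] /in_AF [Av|[Y FY Yv]].
  - exact: qA.2.
  - by apply: (qF Y FY).2; [left|right].
  - by apply: (qF X FX).2; [right|left].
  - have [XY|YX] := Ftot X Y FX FY.
    + by apply: (qF Y FY).2; right => //; apply: XY.
    + by apply: (qF X FX).2; right => //; apply: YX.
exists (A `|` B) => //; split => // M qM ABM.
have AM_M : A `|` M = M by apply/seteqP; split=> x; [case=> // Ax; apply: ABM; left|right].
have MB : M `<=` B.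
  apply: contrapT => nMB; apply: (Bmax M); last by rewrite AM_M.
  by split=> // x Bx; apply: ABM; right.
apply/seteqP; split=> // x Mx; right; exact: MB.
Qed.

Hypothesis f_sym_bilinear : sym_bilinear f.

Lemma premax_q_positiveE (P : set V) :
  q_positive f P -> premax_q_positive f P <-> q_positive f (pi_set f P).
Proof.
move=> qP; have P_pi : P `<=` pi_set f P by move=> b Pb a Pa; apply: qP.2.
split.
- move=> [M [[qM PM] M_unique]].
  suff pi_M : pi_set f P `<=` M.
    by split=> [|u v /pi_M Mu /pi_M Mv]; [case: qP.1 => p /P_pi; exists p|exact: qM.1.2].
  move=> b pib.
  have qPb : q_positive f (P `|` [set b]).
    split=> [|u v [Pu|->] [Pv|->]]; first by exists b; right.
    - exact: qP.2.
    - by rewrite -opprB qfN //; apply: pib.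
    - exact: pib.
    - by rewrite subrr qf0.
  have [M' maxM' PbM'] := q_positive_sub_max qPb.
  have -> : M = M' by apply: M_unique; split=> // x Px; apply: PbM'; left.
  by apply: PbM'; right.
- move=> qpi; exists (pi_set f P); split.
    split=> //; split=> // A qA piA; apply/seteqP; split=> //.
    by apply: q_positive_sub_pi => // x /P_pi /piA.
  move=> M [[qM M_max] PM].
  by apply: M_max => //; apply: q_positive_sub_pi.
Qed.

End MaximalExtension.

Section AffinePi.
Variables (R : realType) (V : lmodType R) (f : V -> V -> R).
Hypothesis f_sym_bilinear : sym_bilinear f.
Variable P : set V.
Hypotheses (P_affine : affine_set P) (qP : q_positive f P).

Lemma affine_addB u w v : P u -> P w -> P v -> P (u + w - v).
Proof.
move=> Pu Pw Pv; have := P_affine 2 (P_affine 2^-1 Pu Pw) Pv.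
suff -> : 2 *: (2^-1 *: u + (1 - 2^-1) *: w) + (1 - 2) *: v = u + w - v by [].
by lincomb4_eq u w v v.
Qed.

Lemma pi_translate b p w : pi_set f P b -> P p -> P w -> pi_set f P (b + (w - p)).
Proof.
move=> pib Pp Pw w' Pw'.
have -> : b + (w - p) - w' = b - (w' + p - w) by lincomb4_eq b w p w'.
by apply: pib; apply: affine_addB.
Qed.

Lemma pi_dilate b p s : pi_set f P b -> P p -> pi_set f P (p + s *: (b - p)).
Proof.
move=> pib Pp w Pw; have [->|s_neq0] := eqVneq s 0.
  by rewrite scale0r addr0; apply: qP.2.
have -> : p + s *: (b - p) - w = s *: (b - (s^-1 *: w + (1 - s^-1) *: p)).
  by lincomb4_coeffs b p w w; field.
by apply: qfZ_ge0 => //; apply: pib; apply: P_affine.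
Qed.

Lemma affine_piE : affine_set (pi_set f P) <-> q_positive f (pi_set f P).
Proof.
have [p0 Pp0] := qP.1.
split=> [pi_affine | qpi].
- split=> [|a b pia pib]; first by exists p0 => a Pa; apply: qP.2.
  have pib' : pi_set f P (p0 + (-1) *: (b - p0)) by apply: pi_dilate.
  have /(qfZ_ge0 f_sym_bilinear 2) := pi_affine _ _ 2^-1 pia pib' p0 Pp0.
  suff -> : 2 *: (2^-1 *: a + (1 - 2^-1) *: (p0 + (-1) *: (b - p0)) - p0) = a - b by [].
  by lincomb4_eq a b p0 p0.
- move=> x y t pix piy w Pw.
  have pix' : pi_set f P (p0 + t *: (x - p0)) by apply: pi_dilate.
  have piyw : pi_set f P ((p0 + (t - 1) *: (y - p0)) + (w - p0)).
    by apply: pi_translate => //; apply: pi_dilate.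
  have -> : t *: x + (1 - t) *: y - w =
      (p0 + t *: (x - p0)) - ((p0 + (t - 1) *: (y - p0)) + (w - p0)).
    by lincomb4_eq x y w p0.
  exact: qpi.2.
Qed.

End AffinePi.

Theorem mainTheorem6 (R : realType) (V : lmodType R) (f : V -> V -> R)
  (P : set V) :
  sym_bilinear f -> nonzero_space V ->
  affine_set P -> q_positive f P ->
  (premax_q_positive f P <-> affine_set (pi_set f P)).
Proof.
move=> f_sym_bilinear _ P_affine qP.
apply: iff_trans (premax_q_positiveE f_sym_bilinear qP) _.
exact: iff_sym (affine_piE f_sym_bilinear P_affine qP).
Qed.
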